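(* Let $\phi$ be a Drinfeld $A$-module of any rank over a finite field $k$ of characteristic $p$. Then $\#\operatorname{Aut}(\phi)\equiv-1\pmod p$.
   Context: $C$ is a smooth, geometrically connected, proper curve over $\mathbb F_q$ ($q$ a power of the prime $p$), $\infty\in C$ a closed point with valuation $v_\infty$, $A=\mathcal O_C(C\setminus\{\infty\})$. Over a field $k\supseteq\mathbb F_q$, a Drinfeld $A$-module of rank $r$ is a ring homomorphism $\phi\colon A\to k\{\tau\}$ into the twisted polynomial ring ($\tau c=c^q\tau$, identified with $\mathbb F_q$-linear endomorphisms of $\mathbb G_a$) such that $\phi(a)$ has $\tau$-degree exactly $-r\deg(\infty)v_\infty(a)$. $\operatorname{Aut}(\phi)$ is the group of units of $k\{\tau\}$ commuting with all $\phi(a)$. *)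

From mathcomp Require Import all_boot all_order all_algebra.
Set Implicit Arguments. Unset Strict Implicit. Unset Printing Implicit Defensive.
Import GRing.Theory.
Local Open Scope ring_scope.

(* Twisted polynomial ring k{tau}, with tau c = c^q tau.  An element
   sum_i f_i tau^i is represented by the coefficient polynomial f : {poly k}
   (coefficient f`_i of tau^i).  Twisted product:
   (f_i tau^i)(g_j tau^j) = f_i g_j^(q^i) tau^(i+j). *)
Definition tmul (k : fieldType) (q : nat) (f g : {poly k}) : {poly k} :=
  \poly_(n < (size f + size g).-1) \sum_(i < n.+1) f`_i * (g`_(n - i)) ^+ (q ^ i).

Definition is_tunit (k : fieldType) (q : nat) (u : {poly k}) : Prop :=
  exists v : {poly k}, tmul q u v = 1 /\ tmul q v u = 1.

(* Abstract stand-in for a |-> -deg(oo) v_oo(a) on A (nonzero a):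
   additive on products, ultrametric, zero on nonzero constants of F_q. *)
Definition inf_degree (Fq : finFieldType) (A : idomainType)
  (iota : {rmorphism Fq -> A}) (degInf : A -> nat) : Prop :=
  [/\ forall a b : A, a != 0 -> b != 0 -> degInf (a * b) = (degInf a + degInf b)%N,
      forall a b : A, (a + b != 0)%R -> (degInf (a + b)%R <= maxn (degInf a) (degInf b))%N
    & forall c : Fq, c != 0 -> degInf (iota c) = 0%N].

Definition is_drinfeld_module (k : fieldType) (q : nat) (A : idomainType)
  (degInf : A -> nat) (r : nat) (phi : A -> {poly k}) : Prop :=
  [/\ phi 1 = 1,
      forall a b, phi (a + b) = phi a + phi b,
      forall a b, phi (a * b) = tmul q (phi a) (phi b)
    & forall a, a != 0 -> phi a != 0 /\ (size (phi a)).-1 = (r * degInf a)%N].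

Definition is_aut (k : fieldType) (q : nat) (A : idomainType)
  (phi : A -> {poly k}) (u : {poly k}) : Prop :=
  is_tunit q u /\ forall a : A, tmul q u (phi a) = tmul q (phi a) u.

(* An automorphism of phi is a unit of k{tau}, hence a nonzero constant c,
   and c commutes with phi(a) exactly when c^(q^n) = c for every n with a
   nonzero tau^n-coefficient in phi(a).  Since q is a power of p, these
   conditions are additive in c, so together with 0 the automorphisms form an
   additive subgroup L of k.  Its order is a power of p, and L contains 0 and
   1, so p divides #|L| = #Aut(phi) + 1. *)
From mathcomp Require Import all_boot all_order all_algebra.
From mathcomp Require Import all_fingroup all_solvable all_field.
From mathcomp Require Import boolp.

Set Implicit Arguments.
Unset Strict Implicit.
Unset Printing Implicit Defensive.
Local Open Scope ring_scope.
Import GRing.Theory.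

Section TwistedPolynomials.
Variables (k : fieldType) (q : nat).
Hypothesis q_gt0 : (0 < q)%N.

Lemma coef_tmul (f g : {poly k}) n : (tmul q f g)`_n =
  if (n < (size f + size g).-1)%N then \sum_(i < n.+1) f`_i * g`_(n - i) ^+ (q ^ i)
  else 0.
Proof. by rewrite coef_poly. Qed.

Lemma expr0n_qpow i : (0 : k) ^+ (q ^ i) = 0.
Proof. by rewrite expr0n expn_eq0 eqn0Ngt q_gt0. Qed.

Lemma tmul0l (g : {poly k}) : tmul q 0 g = 0.
Proof.
apply/polyP=> n; rewrite coef_tmul coef0; case: ifP => // _.
by apply: big1 => i _; rewrite coef0 mul0r.
Qed.

Lemma tmul0r (f : {poly k}) : tmul q f 0 = 0.
Proof.
apply/polyP=> n; rewrite coef_tmul coef0; case: ifP => // _.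
by apply: big1 => i _; rewrite coef0 expr0n_qpow mulr0.
Qed.

Lemma coef_tmul_top (f g : {poly k}) : f != 0 -> g != 0 ->
  (tmul q f g)`_((size f).-1 + (size g).-1) =
  lead_coef f * lead_coef g ^+ (q ^ (size f).-1).
Proof.
move=> f0 g0; rewrite /lead_coef coef_tmul.
have sf : (size f).-1.+1 = size f by rewrite prednK // size_poly_gt0.
have sg : (size g).-1.+1 = size g by rewrite prednK // size_poly_gt0.
set m := (size f).-1 in sf *; set l := (size g).-1 in sg *.
rewrite -sf -sg addSn addnS /= ltnSn.
have m_lt : (m < (m + l).+1)%N by rewrite ltnS leq_addr.
rewrite (bigD1 (Ordinal m_lt)) //= addKn big1 ?addr0 // => i /eqP/val_eqP /= ne.
case: (ltngtP i m) => [lt_im | lt_mi | eq_im]; last by rewrite eq_im eqxx in ne.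
- rewrite [g`_ _]nth_default ?expr0n_qpow ?mulr0 // -sg.
  by rewrite ltn_subRL ltn_add2r.
- by rewrite nth_default ?mul0r // -sf.
Qed.

Lemma tmulCl (c : k) (f : {poly k}) : tmul q c%:P f = c *: f.
Proof.
have [->|c0] := eqVneq c 0; first by rewrite tmul0l scale0r.
apply/polyP=> n; rewrite coef_tmul coefZ size_polyC c0 /=.
case: ifP => [_|/negbT]; last by rewrite -leqNgt => /(nth_default 0) ->; rewrite mulr0.
rewrite big_ord_recl big1 ?addr0 => [|i _]; last by rewrite coefC mul0r.
by rewrite coefC subn0 expn0 expr1.
Qed.

Lemma coef_tmulCr (c : k) (f : {poly k}) n : (tmul q f c%:P)`_n = f`_n * c ^+ (q ^ n).
Proof.
have [->|c0] := eqVneq c 0; first by rewrite tmul0r coef0 expr0n_qpow mulr0.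
rewrite coef_tmul size_polyC c0 addn1 /=.
case: ifP => [_|/negbT]; last by rewrite -leqNgt => /(nth_default 0) ->; rewrite mul0r.
rewrite big_ord_recr /= subnn coefC /= big1 ?add0r // => i _.
by rewrite coefC subn_eq0 leqNgt ltn_ord expr0n_qpow mulr0.
Qed.

Lemma polyC_tmul_comm (c : k) (f : {poly k}) :
  tmul q c%:P f = tmul q f c%:P <-> forall n, f`_n != 0 -> c ^+ (q ^ n) = c.
Proof.
split=> [eq_cf n fn0 | fixed_c].
  have := congr1 (fun g : {poly k} => g`_n) eq_cf.
  by rewrite /= tmulCl coef_tmulCr coefZ mulrC => /(mulfI fn0).
apply/polyP=> n; rewrite tmulCl coef_tmulCr coefZ mulrC.
by have [->|fn0] := eqVneq f`_n 0; rewrite ?mul0r ?fixed_c.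
Qed.

Lemma is_tunitP (u : {poly k}) : is_tunit q u <-> exists2 c, c != 0 & u = c%:P.
Proof.
split=> [[v [uv1 _]] | [c c0 ->]]; last first.
  by exists c^-1%:P; rewrite !tmulCl !scale_polyC mulfV ?mulVf.
have u0 : u != 0 by apply: contra_eqN uv1 => /eqP ->; rewrite tmul0l eq_sym oner_eq0.
have v0 : v != 0 by apply: contra_eqN uv1 => /eqP ->; rewrite tmul0r eq_sym oner_eq0.
have := coef_tmul_top u0 v0; rewrite uv1 coef1.
have [/eqP|_] := eqVneq; last first.
  by move/esym/eqP; rewrite mulf_eq0 expf_eq0 !lead_coef_eq0 (negPf u0) (negPf v0) andbF.
rewrite addn_eq0 => /andP[/eqP deg_u _] _.
have su : size u = 1%N by rewrite -(prednK (_ : 0 < size u)%N) ?deg_u ?size_poly_gt0.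
exists u`_0; last by apply: size1_polyC; rewrite su.
by move: u0; rewrite -lead_coef_eq0 /lead_coef su.
Qed.

End TwistedPolynomials.

Lemma pchar_nat_card (F : finFieldType) (K : fieldType) (j : {rmorphism F -> K}) :
  [pchar K].-nat #|F|.
Proof.
have [p p_pr pF] := finPcharP F.
have -> : #|F| = (p ^ logn p #|F|)%N := card_pprimeChar pF.
have pK : p \in [pchar K] by rewrite (fmorph_pchar j).
by rewrite pnatX (eq_pnat _ (pcharf_eq pK)) pnat_id.
Qed.

Lemma dvdn_pnat_gt1 (p n : nat) : p.-nat n -> (1 < n)%N -> (p %| n)%N.
Proof. by case/p_natP=> [[|e] ->]; rewrite ?expn0 // expnS dvdn_mulr. Qed.

Lemma pnat_card_addr_closed (R : finNzRingType) p (S : {set R}) :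
  p \in [pchar R] -> 0 \in S -> {in S &, forall x y, x + y \in S} -> p.-nat #|S|.
Proof.
move=> pR S0 SD; have gS : group_set (S : {set pPrimeCharType pR}).
  by apply/group_setP; split=> // x y; apply: SD.
exact: pgroupS (subsetT (Group gS)) (pprimeChar_pgroup pR).
Qed.

Section ConstantCentralizer.
Variables (k : finFieldType) (q : nat) (A : idomainType) (phi : A -> {poly k}).
Hypothesis q_pchar : [pchar k].-nat q.

Let q_gt0 : (0 < q)%N. Proof. by case/andP: q_pchar. Qed.

Definition const_centralizer : {set k} :=
  [set c | `[< forall a, tmul q c%:P (phi a) = tmul q (phi a) c%:P >]].

Lemma const_centralizerP c : reflect
  (forall a n, (phi a)`_n != 0 -> c ^+ (q ^ n) = c) (c \in const_centralizer).
Proof.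
rewrite /const_centralizer inE; apply: (iffP (asboolP _)) => [comm_c a | fixed_c a].
  by apply/polyC_tmul_comm.
by apply/polyC_tmul_comm/fixed_c.
Qed.

Lemma const_centralizer0 : 0 \in const_centralizer.
Proof. by apply/const_centralizerP=> a n _; rewrite expr0n_qpow. Qed.

Lemma const_centralizer1 : 1 \in const_centralizer.
Proof. by apply/const_centralizerP=> a n _; rewrite expr1n. Qed.

Lemma const_centralizerD :
  {in const_centralizer &, forall c d, c + d \in const_centralizer}.
Proof.
move=> c d /const_centralizerP fixed_c /const_centralizerP fixed_d.
apply/const_centralizerP=> a n an0.
by rewrite exprDn_pchar ?(fixed_c a) ?(fixed_d a) // pnatX q_pchar.
Qed.

Lemma pchar_dvdn_card_const_centralizer p :
  p \in [pchar k] -> (p %| #|const_centralizer|)%N.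
Proof.
move=> pk; apply: dvdn_pnat_gt1.
  exact: pnat_card_addr_closed pk const_centralizer0 const_centralizerD.
rewrite (cardsD1 0) const_centralizer0 ltnS card_gt0.
by apply/set0Pn; exists 1; rewrite in_setD1 oner_eq0 const_centralizer1.
Qed.

Lemma is_autP u :
  is_aut q phi u <-> exists2 c, c \in const_centralizer :\ 0 & u = c%:P.
Proof.
split=> [[/(is_tunitP q_gt0) [c c0 ->] comm_c] | [c]].
  by exists c; rewrite // !inE c0; apply/asboolP.
rewrite !inE => /andP[c0 /asboolP comm_c] ->.
by split=> //; apply/(is_tunitP q_gt0); exists c.
Qed.

End ConstantCentralizer.

Theorem lemma2p5 (p : nat) (Fq : finFieldType) (k : finFieldType)
  (j : {rmorphism Fq -> k}) (A : idomainType) (iota : {rmorphism Fq -> A})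
  (degInf : A -> nat) (r : nat) (phi : A -> {poly k}) :
  p \in [pchar k] ->
  inf_degree iota degInf ->
  (0 < r)%N ->
  is_drinfeld_module #|Fq| degInf r phi ->
  exists s : seq {poly k},
    [/\ uniq s, (forall u, u \in s <-> is_aut #|Fq| phi u)
      & ((size s).+1 %% p = 0)%N].
Proof.
move=> pk _ _ _; have q_pchar := pchar_nat_card j.
set L := const_centralizer #|Fq| phi.
exists [seq c%:P | c <- enum (L :\ 0)]; split.
- by rewrite map_inj_uniq ?enum_uniq //; apply: polyC_inj.
- move=> u; rewrite (is_autP _ q_pchar); split.
    by case/mapP=> c; rewrite mem_enum; exists c.
  by case=> c Lc ->; apply: map_f; rewrite mem_enum.
- apply/eqP; rewrite size_map -cardE -add1n.
  have := pchar_dvdn_card_const_centralizer phi q_pchar pk.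
  by rewrite (cardsD1 0) const_centralizer0.
Qed.
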